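(* Let $c\le 7$ be a nonnegative integer and let $C\subset V(\tfrac12 H^{0}_{24})$ be such that $\chi_C$ is a perfect coloring of $\tfrac12 H^{0}_{24}$ with parameters $((20+c,\,256-c)(c,\,276-c))$. Then $C$ is a union of spheres.
   Context: $E^{24}$ is the set of binary words of length $24$ with Hamming distance. $\tfrac12 H^{0}_{24}$ is the graph on even-weight words of $E^{24}$, adjacent iff at Hamming distance exactly $2$ (degree $276$). A sphere is a set $S\subset V(\tfrac12 H^{0}_{24})$ consisting of all $24$ words at Hamming distance $1$ from some odd-weight word (its center). For a set $C$ with $\emptyset\ne C\subsetneq V$, $\chi_C$ is a perfect coloring with parameters $((a,b)(c,d))$ if every vertex of $C$ has exactly $a$ neighbours in $C$ and $b$ outside, and every vertex outside $C$ has exactly $c$ neighbours in $C$ and $d$ outside. *)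

From mathcomp Require Import all_boot.
Set Implicit Arguments. Unset Strict Implicit. Unset Printing Implicit Defensive.

Definition word (n : nat) := {ffun 'I_n -> bool}.

Definition wt n (u : word n) : nat := #|[set i | u i]|.
Definition hdist n (u v : word n) : nat := #|[set i | u i != v i]|.

Definition halfcube_V n : {set word n} := [set u | ~~ odd (wt u)].

Definition halfcube_adj n : rel (word n) := fun u v => hdist u v == 2.

Definition sphere n (z : word n) : {set word n} := [set u | hdist u z == 1].

Definition perfect_coloring (T : finType) (V : {set T}) (adj : rel T)
    (C : {set T}) (a b c d : nat) : Prop :=
  [/\ C != set0, C \proper V,
      (forall x, x \in C ->
         #|[set y in V | adj x y && (y \in C)]| = a /\
         #|[set y in V | adj x y && (y \notin C)]| = b) &
      (forall x, x \in V :\: C ->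
         #|[set y in V | adj x y && (y \in C)]| = c /\
         #|[set y in V | adj x y && (y \notin C)]| = d)].

Definition union_of_spheres n (C : {set word n}) : Prop :=
  exists Z : {set word n}, (forall z, z \in Z -> odd (wt z)) /\
    C = \bigcup_(z in Z) sphere z.

(* Words are handled through letter flips.  Counting ordered pairs of flips, the degree
   condition "u has (n-4)[u in C] + c neighbours in C" becomes an identity at every vertex
   (count_pairs_in_C).  Fix x in C.  For each letter i the sphere centred at flip x i passes
   through x; let deg i be the number of other words of C on it.  The identity at x and at
   the words flip (flip x i) j gives deg_sum and pair_identity, which tie the degrees to the
   numbers quad i j of words of C at distance 4 from x.  Summing over j computes their total
   tau i exactly (tau_identity).  Restricting to the letters j whose sphere word lies in C
   gives a lower bound (near_quad_lower) and, by the symmetry of the count under permuting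
   letters, an upper bound (near_quad_upper) for the same quantity.  If no sphere through x
   lay inside C, every deg i would be below c (deg_lt_c); at a letter of maximal degree the
   three facts are then arithmetically incompatible for n = 24 and c <= 7
   (local_counts_incompatible).  Hence every word of C lies on a sphere contained in C
   (sphere_through), and C is the union of these spheres. *)

From mathcomp Require Import all_boot zify.
Set Implicit Arguments. Unset Strict Implicit. Unset Printing Implicit Defensive.

Lemma sum_bool_card (T : finType) (P : pred T) : \sum_x (P x : nat) = #|P|.
Proof.
by rewrite -sum1_card [RHS]big_mkcond; apply: eq_bigr => x _; rewrite unfold_in; case: (P x).
Qed.

Section Flips.
Variable n : nat.
Implicit Types (u v y : word n) (k p q : 'I_n).

Definition flip u k : word n := [ffun m => u m (+) (m == k)].

Lemma flipE u k m : flip u k m = u m (+) (m == k).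
Proof. by rewrite ffunE. Qed.

Lemma flipK u k : flip (flip u k) k = u.
Proof. by apply/ffunP=> m; rewrite !flipE -addbA addbb addbF. Qed.

Lemma flipC u p q : flip (flip u p) q = flip (flip u q) p.
Proof. by apply/ffunP=> m; rewrite !flipE -!addbA (addbC (m == q)). Qed.

Lemma flip_cancel u a b : flip (flip (flip u a) b) a = flip u b.
Proof. by rewrite flipC flipK. Qed.

Lemma flip_cancel3 u a b k : flip (flip (flip (flip u a) b) k) a = flip (flip u b) k.
Proof. by rewrite flipC [flip (flip (flip u a) b) a]flip_cancel. Qed.

Lemma flip3_swap13 u a b k : flip (flip (flip u a) b) k = flip (flip (flip u k) b) a.
Proof.
apply/ffunP=> m; rewrite !flipE.
by case: (u m); case: (m == a); case: (m == b); case: (m == k).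
Qed.

Lemma odd_wt_flip u k : odd (wt (flip u k)) = ~~ odd (wt u).
Proof.
rewrite /wt (cardsD1 k [set i | u i]) (cardsD1 k [set i | flip u k i]).
have -> : [set i | flip u k i] :\ k = [set i | u i] :\ k.
  by apply/setP=> m; rewrite !inE flipE; case: eqVneq; rewrite ?addbF.
by rewrite !inE flipE eqxx addbT !oddD; case: (u k); case: (odd #|_|).
Qed.

Lemma hdist_flip u k : hdist u (flip u k) = 1.
Proof.
rewrite /hdist -(cards1 k); apply: eq_card => m; rewrite !inE flipE.
by case: (u m); case: (m == k).
Qed.

Lemma hdist1_flip u v : hdist u v = 1 -> exists k, u = flip v k.
Proof.
move/eqP/cards1P => [k Hk]; exists k; apply/ffunP => m; rewrite flipE.
have : (m \in [set m | u m != v m]) = (m \in [set k]) by rewrite Hk.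
by rewrite !inE => <-; case: (u m); case: (v m).
Qed.

Lemma sphere_sub (z : word n) (S : {set word n}) :
  (forall k, flip z k \in S) -> sphere z \subset S.
Proof. by move=> zS; apply/subsetP => u; rewrite inE => /eqP/hdist1_flip [k ->]. Qed.

Lemma flip2_eq u y p q : p != q ->
  (flip (flip u p) q == y) = ([set k | u k != y k] == [set p; q]).
Proof.
move=> pq; have disj m : ~~ ((m == p) && (m == q)).
  by apply/andP=> [[/eqP-> /eqP]]; apply/eqP.
apply/eqP/eqP => [<-|D].
  apply/setP=> m; rewrite !inE !flipE.
  by move: (disj m); case: (m == p); case: (m == q); case: (u m).
apply/ffunP=> m; rewrite !flipE.
have : (m \in [set k | u k != y k]) = (m \in [set p; q]) by rewrite D.
by rewrite !inE; move: (disj m); case: (m == p); case: (m == q); case: (u m); case: (y m).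
Qed.

Lemma count_flip2_to u y :
  \sum_p \sum_q ((p != q) && (flip (flip u p) q == y) : nat) = 2 * (hdist u y == 2).
Proof.
rewrite pair_bigA /= sum_bool_card /hdist; set D := [set k | u k != y k].
rewrite (@eq_card _ _ [pred pq | (pq.1 != pq.2) && (D == [set pq.1; pq.2])]); last first.
  by case=> p q; rewrite unfold_in inE /=; case: eqVneq => [->|/flip2_eq->].
case: (boolP (#|D| == 2)) => [/cards2P [a [b [ab DE]]]|nD].
  rewrite (@eq_card _ _ [set (a, b); (b, a)]); last first.
    case=> p q; rewrite !inE DE /= !xpair_eqE.
    apply/andP/idP => [[pq /eqP /setP E]|].
      move: (E p) (E q) pq; rewrite !inE !eqxx orbT /=.
      by case/orP=> /eqP->; case/orP=> /eqP->; rewrite ?eqxx ?orbT.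
    by case/orP=> /andP[/eqP-> /eqP->]; split; rewrite // ?[_ == a]eq_sym // setUC.
  by rewrite cards2 xpair_eqE negb_and ab.
rewrite muln0; apply/eq_card0 => -[p q] /=.
by apply/negP => /andP[pq /eqP DE]; move: nD; rewrite DE cards2 pq.
Qed.

Lemma count_flip2_in u (S : {set word n}) :
  \sum_p \sum_q ((p != q) && (flip (flip u p) q \in S) : nat)
  = 2 * #|[set y in S | hdist u y == 2]|.
Proof.
have expand p q : ((p != q) && (flip (flip u p) q \in S) : nat)
    = \sum_y (((p != q) && (flip (flip u p) q == y)) * (y \in S)).
  rewrite (bigD1 (flip (flip u p) q)) //= eqxx andbT big1 ?addn0 ?mulnb //.
  by move=> y; rewrite eq_sym => /negbTE->; rewrite andbF.
under eq_bigr => p _ do under eq_bigr => q _ do rewrite expand.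
under eq_bigr => p _ do rewrite exchange_big.
rewrite exchange_big /=.
transitivity (\sum_y 2 * ((hdist u y == 2) * (y \in S))).
  apply: eq_bigr => y _; rewrite mulnA -count_flip2_to big_distrl; apply: eq_bigr => p _.
  by rewrite big_distrl.
rewrite -big_distrr /=; congr (2 * _).
have -> : #|[set y in S | hdist u y == 2]| = #|[pred y | (y \in S) && (hdist u y == 2)]|.
  by apply: eq_card => y; rewrite !inE.
by rewrite -sum_bool_card; apply: eq_bigr => y _; rewrite /= andbC mulnb.
Qed.

End Flips.

Section IndexSums.
Variable n : nat.
Implicit Types (F : 'I_n -> nat) (i j : 'I_n).

Lemma sum_delta F j : \sum_q ((q == j) * F q) = F j.
Proof. by rewrite (bigD1 j) //= eqxx mul1n big1 ?addn0 // => q /negbTE->. Qed.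

Lemma sum_indicator j : \sum_q ((q == j) : nat) = 1.
Proof. by rewrite -(sum_delta (fun=> 1) j); apply: eq_bigr => q _; rewrite muln1. Qed.

Lemma sum_delta_fst F j : \sum_p \sum_q ((p == j) * F q) = \sum_q F q.
Proof. by rewrite exchange_big; apply: eq_bigr => q _; apply: (sum_delta (fun=> F q)). Qed.

Lemma sum_delta_snd F j : \sum_p \sum_q ((q == j) * F p) = \sum_p F p.
Proof. by apply: eq_bigr => p _; apply: (sum_delta (fun=> F p)). Qed.

Lemma sum_split_at F i : \sum_j F j = F i + \sum_j ((j != i) * F j).
Proof.
rewrite -[F i](sum_delta F i) -big_split; apply: eq_bigr => j _.
by case: (j == i); rewrite /= ?mul1n ?mul0n ?addn0 ?add0n.
Qed.

Lemma sum_neq i : \sum_j ((j != i) : nat) = n - 1.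
Proof.
have := sum_split_at (fun=> 1) i; rewrite sum_nat_const card_ord.
under eq_bigr => j _ do rewrite muln1.
lia.
Qed.

Definition sum3 (F : 'I_n -> 'I_n -> 'I_n -> nat) : nat := \sum_j \sum_p \sum_q F j p q.

Lemma eq_sum3 (F G : 'I_n -> 'I_n -> 'I_n -> nat) :
  (forall j p q, F j p q = G j p q) -> sum3 F = sum3 G.
Proof.
by move=> FG; apply: eq_bigr => j _; apply: eq_bigr => p _; apply: eq_bigr => q _.
Qed.

Lemma leq_sum3 (F G : 'I_n -> 'I_n -> 'I_n -> nat) :
  (forall j p q, F j p q <= G j p q) -> sum3 F <= sum3 G.
Proof.
by move=> FG; apply: leq_sum => j _; apply: leq_sum => p _; apply: leq_sum => q _.
Qed.

Lemma sum3D (F G : 'I_n -> 'I_n -> 'I_n -> nat) :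
  sum3 (fun j p q => F j p q + G j p q) = sum3 F + sum3 G.
Proof.
rewrite /sum3 -big_split; apply: eq_bigr => j _.
by rewrite -big_split; apply: eq_bigr => p _; rewrite big_split.
Qed.

Lemma sum3Ml k (F : 'I_n -> 'I_n -> 'I_n -> nat) :
  sum3 (fun j p q => k * F j p q) = k * sum3 F.
Proof.
rewrite /sum3 big_distrr; apply: eq_bigr => j _.
by rewrite big_distrr; apply: eq_bigr => p _; rewrite big_distrr.
Qed.

Lemma sum3_cube F : sum3 (fun j p q => F j * F p * F q) = (\sum_j F j) ^ 3.
Proof.
rewrite /sum3 !expnS expn0 muln1 big_distrl; apply: eq_bigr => j _.
rewrite big_distrl big_distrr; apply: eq_bigr => p _.
by rewrite /= mulnA big_distrr.
Qed.

Lemma sum3_swap12 (F : 'I_n -> 'I_n -> 'I_n -> nat) :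
  sum3 F = sum3 (fun j p q => F p j q).
Proof. exact: exchange_big. Qed.

Lemma sum3_swap13 (F : 'I_n -> 'I_n -> 'I_n -> nat) :
  sum3 F = sum3 (fun j p q => F q p j).
Proof.
transitivity (\sum_j \sum_q \sum_p F j p q).
  by apply: eq_bigr => j _; rewrite exchange_big.
by rewrite /sum3 exchange_big; apply: eq_bigr => q _; rewrite exchange_big.
Qed.

End IndexSums.

Section LocalCounts.
Variables (n c : nat) (C : {set word n}).
Hypothesis C_sub : C \subset halfcube_V n.
Hypothesis C_deg : forall u, u \in halfcube_V n ->
  #|[set y in halfcube_V n | halfcube_adj u y && (y \in C)]| = (n - 4) * (u \in C) + c.

Implicit Types (u : word n) (i j k p q : 'I_n).

Lemma flip2_V u p q : u \in halfcube_V n -> flip (flip u p) q \in halfcube_V n.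
Proof. by rewrite !inE !odd_wt_flip negbK. Qed.

Lemma count_pairs_in_C u : u \in halfcube_V n ->
  \sum_p \sum_q ((p != q) && (flip (flip u p) q \in C) : nat)
  = 2 * ((n - 4) * (u \in C) + c).
Proof.
move=> uV; rewrite count_flip2_in -C_deg //; congr (2 * _); apply: eq_card => y.
rewrite !inE /halfcube_adj andbC.
by case: (boolP (y \in C)) => [/(subsetP C_sub)|_]; rewrite ?inE ?andbF ?andbT // => ->.
Qed.

Variable x : word n.
Hypothesis x_in_C : x \in C.

Lemma x_in_V : x \in halfcube_V n.
Proof. exact: subsetP C_sub x x_in_C. Qed.

(* hit i k: the word obtained from the center flip x i of a sphere through x by flipping k
   lies in C; for k = i this word is x itself. *)
Definition hit i k : bool := flip (flip x i) k \in C.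

(* deg i: the number of words of C other than x on the sphere centred at flip x i. *)
Definition adj i k : bool := (k != i) && hit i k.
Definition deg i : nat := \sum_k adj i k.

Definition fresh i j k : bool := (k != i) && (k != j).
Definition quad i j : nat := \sum_p \sum_q
  [&& fresh i j p, fresh i j q, p != q & flip (flip (flip (flip x i) j) p) q \in C].

(* tau i: the ordered triples (j, p, q) of distinct letters other than i such that flipping
   i, j, p, q in x gives a word of C (six triples per such word); near_quad i: those triples
   whose first letter j satisfies adj i j. *)
Definition tau i : nat := \sum_j (j != i) * quad i j.
Definition near_quad i : nat := \sum_j adj i j * quad i j.

Lemma hit_sym i k : hit i k = hit k i.
Proof. by rewrite /hit flipC. Qed.

Lemma hit_self i : hit i i.
Proof. by rewrite /hit flipK. Qed.

Lemma fresh_sym i j k : fresh i j k = fresh j i k.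
Proof. exact: andbC. Qed.

(* The neighbours of x in C are spread over the spheres through x. *)
Lemma deg_sum : \sum_i deg i = 2 * ((n - 4) + c).
Proof.
have := count_pairs_in_C x_in_V; rewrite x_in_C muln1 => <-.
by apply: eq_bigr => p _; apply: eq_bigr => q _; rewrite /adj eq_sym.
Qed.

Lemma deg_split i j : i != j -> deg i = adj i j + \sum_q (fresh i j q && hit i q).
Proof.
move=> ij; rewrite /deg (sum_split_at _ j); congr (_ + _).
by apply: eq_bigr => q _; rewrite /adj /fresh mulnb andbCA andbA.
Qed.

Ltac rewrite_neqs := repeat match goal with H : is_true (?a != ?b) |- _ =>
  rewrite ?(negbTE H); rewrite eq_sym in H; rewrite ?(negbTE H); clear H end.

(* Sorting the ordered pairs (p, q) of flips from the word flip x i j according to how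
   {p, q} meets {i, j}: back to x, back to a sphere through x, or away to distance 4. *)
Lemma flip4_split i j p q : i != j ->
  ((p != q) && (flip (flip (flip (flip x i) j) p) q \in C) : nat) =
  (p == i) * (q == j) + (p == j) * (q == i)
  + (p == i) * (fresh i j q && hit j q) + (p == j) * (fresh i j q && hit i q)
  + (q == i) * (fresh i j p && hit j p) + (q == j) * (fresh i j p && hit i p)
  + [&& fresh i j p, fresh i j q, p != q & flip (flip (flip (flip x i) j) p) q \in C].
Proof.
move=> ij; rewrite /fresh /hit.
case: (eqVneq p i) => [->|pi]; [|case: (eqVneq p j) => [->|pj]];
  (case: (eqVneq q i) => [->|qi]; [|case: (eqVneq q j) => [->|qj]]);
  rewrite ?flip_cancel3 ?flip_cancel ?flipK ?x_in_C ?eqxx; rewrite_neqs;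
  by rewrite /= ?mul1n ?muln1 ?mul0n ?muln0 ?add0n ?addn0.
Qed.

(* Counting the C-neighbours of the vertex flip x i j in the three classes above. *)
Lemma pair_identity i j : i != j ->
  quad i j + 2 + 2 * (deg i + deg j) = 2 * ((n - 4) * hit i j + c) + 4 * hit i j.
Proof.
move=> ij; have := count_pairs_in_C (flip2_V i j x_in_V).
under eq_bigr => p _ do under eq_bigr => q _ do rewrite flip4_split //.
under eq_bigr => p _ do rewrite !big_split /=.
rewrite !big_split /= !sum_delta_fst !sum_delta_snd !sum_indicator -/(quad i j) => <-.
have ji : j != i by rewrite eq_sym.
rewrite (deg_split ij) (deg_split ji) /adj ij ji /= hit_sym.
under [in \sum_q (fresh j i q && _)]eq_bigr => q _ do rewrite fresh_sym.
set si := \sum_q (fresh i j q && hit i q : nat); set sj := \sum_q (fresh i j q && hit j q : nat).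
lia.
Qed.

Lemma deg_lt_c i k : i != k -> ~~ hit i k -> deg i < c.
Proof. by move=> ik /negbTE hik; have := pair_identity ik; rewrite hik; lia. Qed.

(* Summing the pair identity over the second letter j determines tau i. *)
Lemma tau_identity i : 4 <= n -> tau i + 2 * (n - 1) + 4 * (n - 4) + 4 * c = 2 * (n - 1) * c.
Proof.
move=> n_ge4; have pointwise j : (j != i) * quad i j + (j != i) * 2 + (j != i) * (2 * deg i)
    + (j != i) * deg j * 2 = adj i j * (2 * (n - 4) + 4) + (j != i) * (2 * c).
  rewrite /adj; case: (eqVneq j i) => [->|ji]; first by [].
  have ij : i != j by rewrite eq_sym.
  by have := pair_identity ij; lia.
have := @eq_bigr _ 0 addn _ (index_enum 'I_n) xpredT _ _ (fun j _ => pointwise j).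
rewrite !big_split -!big_distrl /= sum_neq -/(tau i) -/(deg i).
have := sum_split_at deg i; rewrite deg_sum.
set others := \sum_j _ * deg j.
nia.
Qed.

Lemma near_quad_lower i M : 4 <= n -> (forall j, adj i j -> deg j <= M) ->
  deg i * (2 * c + 2 * (n - 3)) <= near_quad i + deg i * (2 * deg i + 2 * M).
Proof.
move=> n_ge4 degM; have as_sum K : deg i * K = \sum_j adj i j * K by rewrite big_distrl.
rewrite !as_sum -big_split; apply: leq_sum => j _.
case A: (adj i j); last by [].
have ij : i != j by move: A; rewrite /adj eq_sym => /andP[].
have := pair_identity ij; have := degM j A; move: A; rewrite /adj => /andP[_ ->] /=.
lia.
Qed.

Definition tri i j p q : bool :=
  [&& j != i, fresh i j p, fresh i j q, p != q & flip (flip (flip (flip x i) j) p) q \in C].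

Lemma tau_tri i : tau i = sum3 (tri i).
Proof.
apply: eq_bigr => j _; rewrite /quad big_distrr; apply: eq_bigr => p _.
by rewrite big_distrr; apply: eq_bigr => q _; rewrite /= mulnb.
Qed.

Lemma near_quad_tri i : near_quad i = sum3 (fun j p q => hit i j * tri i j p q).
Proof.
apply: eq_bigr => j _; rewrite /quad big_distrr; apply: eq_bigr => p _.
by rewrite big_distrr; apply: eq_bigr => q _; rewrite /= /tri /adj; case: (j != i); case: (hit i j).
Qed.

Lemma tri_swap12 i j p q : tri i j p q = tri i p j q.
Proof.
rewrite /tri /fresh [flip (flip (flip x i) j) p]flipC [j == p]eq_sym [q == p]eq_sym [j == q]eq_sym.
by case: (j == i); case: (p == i); case: (q == i); case: (p == j); case: (q == j); case: (p == q).
Qed.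

Lemma tri_swap13 i j p q : tri i j p q = tri i q p j.
Proof.
rewrite /tri /fresh flip3_swap13 [j == q]eq_sym.
by case: (j == i); case: (p == i); case: (q == i); case: (p == j); case: (q == j); case: (p == q).
Qed.

Lemma tri_bound i j p q :
  (hit i j + hit i p + hit i q) * tri i j p q <= 2 * tri i j p q + adj i j * adj i p * adj i q.
Proof.
case T: (tri i j p q); last by rewrite !muln0.
move: T; rewrite /tri /fresh /adj => /and5P[-> /andP[-> _] /andP[-> _] _ _].
by case: (hit i j); case: (hit i p); case: (hit i q).
Qed.

(* Upper bound: the symmetry of tri lets each word be counted three times. *)
Lemma near_quad_upper i : 3 * near_quad i <= 2 * tau i + deg i ^ 3.
Proof.
have via_p : near_quad i = sum3 (fun j p q => hit i p * tri i j p q).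
  by rewrite near_quad_tri sum3_swap12; apply: eq_sum3 => j p q; rewrite tri_swap12.
have via_q : near_quad i = sum3 (fun j p q => hit i q * tri i j p q).
  by rewrite near_quad_tri sum3_swap13; apply: eq_sum3 => j p q; rewrite tri_swap13.
have -> : 3 * near_quad i = sum3 (fun j p q => (hit i j + hit i p + hit i q) * tri i j p q).
  rewrite (@eq_sum3 _ _ (fun j p q => hit i j * tri i j p q + hit i p * tri i j p q
                                      + hit i q * tri i j p q)); last first.
    by move=> j p q; rewrite !mulnDl.
  by rewrite !sum3D -near_quad_tri -via_p -via_q !mulSn mul0n addn0 addnA.
apply: leq_trans (leq_sum3 (tri_bound i)) _.
by rewrite sum3D sum3Ml -tau_tri sum3_cube.
Qed.

End LocalCounts.

(* The arithmetic core, for n = 24: at a sphere of maximal degree D through x the bounds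
   on near_quad contradict each other when c <= 7. *)
Lemma local_counts_incompatible c D S T :
  c <= 7 -> D < c -> 40 + 2 * c <= 24 * D -> T + 126 = 42 * c ->
  D * (2 * c + 42) <= S + D * (4 * D) -> 3 * S <= 2 * T + D ^ 3 -> False.
Proof.
move=> c7 Dc avg Tc lower upper.
have {S lower upper} : 3 * (D * (2 * c + 42)) <= 3 * (D * (4 * D)) + 2 * T + D ^ 3 by lia.
have D_cases : D = 2 \/ D = 3 \/ D = 4 \/ D = 5 \/ D = 6 by lia.
have c_cases : c = 3 \/ c = 4 \/ c = 5 \/ c = 6 \/ c = 7 by lia.
move: avg Dc Tc.
by case: c_cases => [|[|[|[|]]]] ->; case: D_cases => [|[|[|[|]]]] ->; lia.
Qed.

Lemma perfect_coloring_deg n (C : {set word n}) c b d :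
  perfect_coloring (halfcube_V n) (@halfcube_adj n) C (n - 4 + c) b c d ->
  forall u, u \in halfcube_V n ->
  #|[set y in halfcube_V n | halfcube_adj u y && (y \in C)]| = (n - 4) * (u \in C) + c.
Proof.
case=> _ _ deg_in deg_out u uV; case: (boolP (u \in C)) => uC.
  by case: (deg_in u uC) => -> _; rewrite muln1.
have uVC : u \in halfcube_V n :\: C by rewrite in_setD uC uV.
by case: (deg_out u uVC) => -> _; rewrite muln0.
Qed.

Lemma sphere_through (c : nat) (C : {set word 24}) x :
  c <= 7 -> C \subset halfcube_V 24 ->
  (forall u, u \in halfcube_V 24 ->
     #|[set y in halfcube_V 24 | halfcube_adj u y && (y \in C)]| = (24 - 4) * (u \in C) + c) ->
  x \in C -> exists i, sphere (flip x i) \subset C.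
Proof.
move=> c7 C_sub C_deg x_in_C; have n_ge4 : 4 <= 24 by [].
have [/existsP [i /forallP full]|/existsPn none] := boolP [exists i, [forall k, hit C x i k]].
  by exists i; apply: sphere_sub.
have deg_lt i : deg C x i < c.
  have /forallPn [k hik] := none i.
  have ik : i != k by apply: contraNneq hik => <-; exact: hit_self.
  exact (deg_lt_c C_sub C_deg x_in_C ik hik).
pose i := [arg max_(i > ord0) deg C x i].
have deg_max j : deg C x j <= deg C x i by rewrite /i; case: arg_maxnP => // m _ ; apply.
have avg : 40 + 2 * c <= 24 * deg C x i.
  have sum_le : \sum_j deg C x j <= \sum_(j : 'I_24) deg C x i by apply: leq_sum => j _.
  by move: sum_le; rewrite (deg_sum C_sub C_deg x_in_C) sum_nat_const card_ord; lia.
have tau_eq := tau_identity C_sub C_deg x_in_C i n_ge4.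
have lower := near_quad_lower C_sub C_deg x_in_C n_ge4 (fun j (_ : adj C x i j) => deg_max j).
have upper := near_quad_upper C x i.
by case: (local_counts_incompatible c7 (deg_lt i) avg _ _ upper); lia.
Qed.

Theorem lemma7 (c : nat) (C : {set word 24}) :
  c <= 7 ->
  perfect_coloring (halfcube_V 24) (@halfcube_adj 24) C (20 + c) (256 - c) c (276 - c) ->
  union_of_spheres C.
Proof.
move=> c7 pc; have C_sub : C \subset halfcube_V 24 by case: pc => _ /proper_sub.
have C_deg := perfect_coloring_deg pc.
exists [set z | odd (wt z) && (sphere z \subset C)]; split.
  by move=> z; rewrite inE => /andP[].
apply/setP => u; apply/idP/bigcupP => [uC|[z]]; last first.
  by rewrite inE => /andP[_ /subsetP]; apply.
have [i sub] := sphere_through c7 C_sub C_deg uC.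
exists (flip u i); last by rewrite inE hdist_flip.
by rewrite inE odd_wt_flip sub andbT; move: (subsetP C_sub u uC); rewrite inE.
Qed.
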